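(* Let $x$ be a test input with finite nonempty candidate-output set $\mathcal{Y}_x$, let $\sigma^*_x\colon \mathcal{Y}_x\to\mathbb{N}$ be the ground-truth ranking function on $\mathcal{Y}_x$, and let $\hat{\sigma}^U_x\colon\mathcal{Y}_x\to\mathbb{N}$ be the ranking derived from a utility function $U$ learnt by an $\epsilon$-convergent L2R algorithm, i.e. there is a non-negative integer $\epsilon$ with $\max_{y\in\mathcal{Y}_x}|\hat{\sigma}^U_x(y)-\sigma^*_x(y)|\le\epsilon$. Let $\pi^*$ be an optimal policy for $M_x(\sigma^*_x)$, and let $\hat{\pi}_n$ be the proper policy for $M_x(\hat{\sigma}^U_x)$ learnt by a $\delta$-convergent RL algorithm after $n$ episodes. Then, as $n\to\infty$, $$\lim_{n\to\infty}\mathcal{R}_{\sigma^*_x}(\hat{\pi}_n|x)\;\ge\;\mathcal{R}_{\sigma^*_x}(\pi^*|x)-\delta-\epsilon .$$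
   Context: Setting: for an input $x$, $\mathcal{Y}_x$ is the finite set of admissible outputs (e.g. extractive summaries of $x$ satisfying a length limit). A ranking function $\sigma_x\colon\mathcal{Y}_x\to\mathbb{N}$ assigns to each $y\in\mathcal{Y}_x$ the number of candidates in $\mathcal{Y}_x$ of equal or lower quality than $y$ (including $y$ itself) with respect to some quality preorder; in particular a highest-quality candidate gets value $|\mathcal{Y}_x|$. The ground-truth ranking $\sigma^*_x$ is of this form. Given a utility function $U(y,x)\in\mathbb{R}$, the derived ranking is $\hat{\sigma}^U_x(y)=|\{y'\in\mathcal{Y}_x: U(y',x)\le U(y,x)\}|$, so that $\hat{\sigma}^U_x(y_1)>\hat{\sigma}^U_x(y_2)$ iff $U(y_1,x)>U(y_2,x)$. $M_x(\sigma_x)$ denotes the episodic Markov decision process for generating an output for $x$ (states are partial outputs, actions add a component or terminate) in which the only nonzero reward is given at the end of an episode and equals $\sigma_x(y)$ for the generated output $y$. A policy $\pi$ induces probabilities $\pi(y|x)$ of generating $y\in\mathcal{Y}_x$; it is proper if $\sum_{y\in\mathcal{Y}_x}\pi(y|x)=1$. For a proper policy the expected reward is $\mathcal{R}_{\sigma_x}(\pi|x)=\sum_{y\in\mathcal{Y}_x}\pi(y|x)\sigma_x(y)$, and an optimal policy for $M_x(\sigma_x)$ is one maximizing this quantity (so it puts positive probability only on outputs with $\sigma_x(y)=|\mathcal{Y}_x|$ and has expected reward $|\mathcal{Y}_x|$). An RL algorithm is $\delta$-convergent for $M_x(\sigma_x)$ (with $\delta\in\mathbb{R}_{\ge0}$)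 if, denoting by $\pi_n$ its policy after $n$ episodes of learning and by $\pi^*$ an optimal policy for $M_x(\sigma_x)$, $\lim_{n\to\infty}\big(\mathcal{R}_{\sigma_x}(\pi^*|x)-\mathcal{R}_{\sigma_x}(\pi_n|x)\big)\le\delta$. *)

From HB Require Import structures.
From mathcomp Require Import all_boot all_order all_algebra.
From mathcomp Require Import all_classical all_reals all_analysis.
Set Implicit Arguments. Unset Strict Implicit. Unset Printing Implicit Defensive.
Import Order.TTheory GRing.Theory Num.Theory.
Local Open Scope ring_scope.

(* Y plays the role of the finite candidate set \mathcal{Y}_x (x fixed). *)

Definition is_preorder (Y : finType) (le : rel Y) : Prop :=
  reflexive le /\ transitive le.

Definition is_ranking (Y : finType) (sigma : Y -> nat) : Prop :=
  exists le : rel Y, is_preorder le /\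
    forall y, sigma y = #|[set y' | le y' y]|.

Definition derived_ranking (R : realType) (Y : finType) (U : Y -> R) : Y -> nat :=
  fun y => #|[set y' | U y' <= U y]|.

(* A policy is represented by the probabilities pi(y|x) it induces on Y. *)
Definition proper_policy (R : realType) (Y : finType) (pi : Y -> R) : Prop :=
  (forall y, 0 <= pi y) /\ \sum_(y : Y) pi y = 1.

Definition exp_reward (R : realType) (Y : finType) (sigma : Y -> nat)
  (pi : Y -> R) : R := \sum_(y : Y) pi y * (sigma y)%:R.

Definition optimal (R : realType) (Y : finType) (sigma : Y -> nat)
  (pi : Y -> R) : Prop :=
  proper_policy pi /\ forall pi' : Y -> R, proper_policy pi' ->
    exp_reward sigma pi' <= exp_reward sigma pi.

Definition delta_convergent (R : realType) (Y : finType) (sigma : Y -> nat)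
  (pis : nat -> Y -> R) (delta : R) : Prop :=
  forall pistar : Y -> R, optimal sigma pistar ->
    cvgn (fun n => exp_reward sigma pistar - exp_reward sigma (pis n)) /\
    limn (fun n => exp_reward sigma pistar - exp_reward sigma (pis n)) <= delta.

(** The learnt utility [U] ranks some candidate [ymax] above all others, so
   [ymax] gets the maximal rank [#|Y|] under the derived ranking and the Dirac
   policy at [ymax] is optimal for [M_x(hat sigma)], with reward [#|Y|].
   Since the derived ranking exceeds the true one by at most [eps] everywhere,
   every proper policy [pi] satisfies
   [R_(sigma* )(pi) >= R_(hat sigma)(pi) - eps = #|Y| - gap - eps], where [gap]
   is its regret in [M_x(hat sigma)].  Any proper policy, [pi*] included, has
   reward at most [#|Y|] since ranks never exceed [#|Y|]; passing to the limit
   inferior of the regrets of [pi_n], which converge to at most [delta], gives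
   the bound. *)

From HB Require Import structures.
From mathcomp Require Import all_boot all_order all_algebra.
From mathcomp Require Import all_classical all_reals all_analysis.
From mathcomp Require Import zify lra.
Set Implicit Arguments. Unset Strict Implicit. Unset Printing Implicit Defensive.
Import Order.TTheory GRing.Theory Num.Theory.
Local Open Scope ring_scope.

Section Rankings.
Variables (R : realType) (Y : finType).

Lemma ranking_le_card (sigma : Y -> nat) y :
  is_ranking sigma -> (sigma y <= #|Y|)%N.
Proof. by move=> [? [_ ->]]; exact: max_card. Qed.

Lemma derived_ranking_le_card (U : Y -> R) y : (derived_ranking U y <= #|Y|)%N.
Proof. exact: max_card. Qed.

Lemma derived_ranking_arg_max (U : Y -> R) (y0 : Y) :
  derived_ranking U [arg max_(y > y0) U y]%O = #|Y|.
Proof.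
rewrite /derived_ranking -cardsT; congr #|pred_of_set _|.
apply/setP => y; rewrite !inE.
by case: real_arg_maxP => // [i _|i _ imax]; [exact: num_real|exact: imax].
Qed.

Lemma leq_add_distn_bigmax (s1 s2 : Y -> nat) (eps : nat) :
  (\max_(y : Y) `|s1 y - s2 y| <= eps)%N -> forall y, (s1 y <= s2 y + eps)%N.
Proof.
move=> max_le y.
have := leq_trans (leq_bigmax_cond (F := fun y => `|s1 y - s2 y|%N) y isT) max_le.
lia.
Qed.

End Rankings.

Section Policies.
Variables (R : realType) (Y : finType).
Implicit Types (sigma : Y -> nat) (pi : Y -> R).

Definition dirac_policy (y0 : Y) : Y -> R := fun y => (y == y0)%:R.

Lemma dirac_policy_proper y0 : proper_policy (dirac_policy y0).
Proof.
split=> [y|]; first exact: ler0n.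
by rewrite (bigD1 y0) //= /dirac_policy eqxx big1 ?addr0 // => y /negbTE ->.
Qed.

Lemma exp_reward_dirac sigma y0 :
  exp_reward sigma (dirac_policy y0) = (sigma y0)%:R.
Proof.
rewrite /exp_reward (bigD1 y0) //= /dirac_policy eqxx mul1r big1 ?addr0 //.
by move=> y /negbTE ->; rewrite mul0r.
Qed.

Lemma exp_reward_le_bound sigma pi (N : nat) :
  proper_policy pi -> (forall y, (sigma y <= N)%N) -> exp_reward sigma pi <= N%:R.
Proof.
move=> [pi_ge0 pi_sum1] sigmaN.
have -> : N%:R = \sum_y pi y * N%:R :> R by rewrite -mulr_suml pi_sum1 mul1r.
by apply: ler_sum => y _; apply: ler_wpM2l; [exact: pi_ge0|rewrite ler_nat].
Qed.

Lemma optimal_dirac_max sigma ymax :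
  (forall y, (sigma y <= sigma ymax)%N) -> optimal sigma (dirac_policy ymax).
Proof.
move=> ymax_max; split=> [|pi pi_proper]; first exact: dirac_policy_proper.
by rewrite exp_reward_dirac; exact: exp_reward_le_bound.
Qed.

Lemma exp_reward_subr_le sigma1 sigma2 pi (eps : nat) :
  proper_policy pi -> (forall y, (sigma1 y <= sigma2 y + eps)%N) ->
  exp_reward sigma1 pi - eps%:R <= exp_reward sigma2 pi.
Proof.
move=> [pi_ge0 pi_sum1] sigma12; rewrite lerBlDr.
have -> : eps%:R = \sum_y pi y * eps%:R :> R by rewrite -mulr_suml pi_sum1 mul1r.
rewrite -big_split /=.
apply: ler_sum => y _; rewrite -mulrDr.
by apply: ler_wpM2l; [exact: pi_ge0|rewrite -natrD ler_nat].
Qed.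

End Policies.

Section LimInf.
Local Open Scope ereal_scope.
Variable R : realType.

Lemma lee_limn_einf (u v : (\bar R)^nat) :
  (forall n, v n <= u n) -> limn_einf v <= limn_einf u.
Proof.
move=> vu; rewrite !limn_einf_lim; apply: lee_lim; try exact: is_cvg_einfs.
apply: nearW => n; apply: le_ereal_inf_tmp => _ [m /= nm <-].
by apply: le_trans (vu m); apply: ereal_inf_lbound; exists m.
Qed.

Lemma cvg_le_limn_einf (u v : (\bar R)^nat) (l : \bar R) :
  (v @ \oo --> l)%classic -> (forall n, v n <= u n) -> l <= limn_einf u.
Proof. by move=> /cvg_limn_einf_sup[<- _]; exact: lee_limn_einf. Qed.

End LimInf.

Theorem theorem1 (R : realType) (Y : finType) (y0 : Y)
  (sigma_star : Y -> nat) (U : Y -> R) (eps : nat)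
  (pistar : Y -> R) (pis : nat -> Y -> R) (delta : R) :
  is_ranking sigma_star ->
  (\max_(y : Y) `|derived_ranking U y - sigma_star y| <= eps)%N ->
  optimal sigma_star pistar ->
  0 <= delta ->
  (forall n, proper_policy (pis n)) ->
  delta_convergent (derived_ranking U) pis delta ->
  ((exp_reward sigma_star pistar - delta - eps%:R)%:E <=
     limn_einf (fun n => (exp_reward sigma_star (pis n))%:E))%E.
Proof.
move=> sigma_rank U_eps [pistar_proper _] _ pis_proper pis_conv.
set ymax := [arg max_(y > y0) U y]%O.
have ymax_top : derived_ranking U ymax = #|Y| := derived_ranking_arg_max U y0.
have ymax_opt : optimal (derived_ranking U) (dirac_policy R ymax).
  by apply: optimal_dirac_max => y; rewrite ymax_top derived_ranking_le_card.
have [gap_cvg gap_le] := pis_conv _ ymax_opt.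
set gap := fun n => _ in gap_cvg gap_le.
set c := exp_reward sigma_star pistar.
have c_le : c <= #|Y|%:R.
  by apply: exp_reward_le_bound => // y; exact: ranking_le_card.
apply: le_trans (_ : (c - eps%:R - limn gap)%:E <= _)%E.
  by rewrite lee_fin; lra.
apply: (@cvg_le_limn_einf _ _ (fun n => (c - eps%:R - gap n)%:E)).
  apply: cvg_EFin; first exact: nearW.
  exact: cvgB (cvg_cst _) gap_cvg.
move=> n; rewrite lee_fin.
have := exp_reward_subr_le (pis_proper n) (leq_add_distn_bigmax U_eps).
rewrite /gap /= exp_reward_dirac ymax_top; lra.
Qed.
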